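(* Let $T>0$, let $F:\mathbb{R}^n\rightrightarrows\mathbb{R}^n$ be a set-valued mapping with closed graph, and let $f:[0,T]\times\mathbb{R}^n\to\mathbb{R}^n$ be continuously differentiable. Let $x:[0,T]\to\mathbb{R}^n$ be continuous with $0\in f(t,x(t))+F(x(t))$ for each $t\in[0,T]$, and set $W:=\{(x(t),-f(t,x(t))):t\in[0,T]\}$. Suppose $F$ is uniformly semismooth$^*$ on $W$. Then for each $\varepsilon>0$ there is $\delta>0$ such that for each $t\in[0,T]$, each $(x,y)\in(B[x(t),\delta]\times B[0,\delta])\cap\operatorname{gph}(f(t,\cdot)+F)$ and each $(y^*,x^* )\in\operatorname{gph}D^*(f(t,\cdot)+F)(x,y)$ we have $$|\langle x^*,x-x(t)\rangle-\langle y^*,y\rangle|\le\varepsilon\|(x^*,y^* )\|\,\|(x,y)-(x(t),0)\|.$$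
   Context: Euclidean norm on $\mathbb{R}^n$, max-norm $\|(a,b)\|=\max\{\|a\|,\|b\|\}$ on products; $B[z,r]$ is the closed ball. The limiting coderivative of a set-valued map $G$ at $(x,y)\in\operatorname{gph}G$ is given by $\operatorname{gph}D^*G(x,y)=\{(y^*,x^* ):(x^*,-y^* )\in N_{\operatorname{gph}G}(x,y)\}$, $N$ the limiting normal cone. $F$ is uniformly semismooth$^*$ on a set $W$ if for each $\varepsilon>0$ there is $\delta>0$ such that for each $(u,z)\in W$, each $(x,y)\in(B[u,\delta]\times B[z,\delta])\cap\operatorname{gph}F$ and each $(y^*,x^* )\in\operatorname{gph}D^*F(x,y)$: $|\langle x^*,x-u\rangle-\langle y^*,y-z\rangle|\le\varepsilon\|(x^*,y^* )\|\,\|(x,y)-(u,z)\|$. *)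

From HB Require Import structures.
From mathcomp Require Import all_boot all_order all_algebra.
From mathcomp Require Import reals.
Set Implicit Arguments. Unset Strict Implicit. Unset Printing Implicit Defensive.
Import Order.TTheory GRing.Theory Num.Theory.
Local Open Scope ring_scope.

Section Defs.
Context {R : realType} {n : nat}.
Local Notation vec := 'rV[R]_n.

Definition dot (u v : vec) : R := \sum_(i < n) u 0 i * v 0 i.
Definition enorm (u : vec) : R := Num.sqrt (dot u u).

Definition pnorm (p : vec * vec) : R := Num.max (enorm p.1) (enorm p.2).
Definition pdot (p q : vec * vec) : R := dot p.1 q.1 + dot p.2 q.2.
Definition psub (p q : vec * vec) : vec * vec := (p.1 - q.1, p.2 - q.2).

Definition pconv (u : nat -> vec * vec) (l : vec * vec) : Prop :=
  forall eps : R, 0 < eps -> exists N : nat, forall k : nat, (N <= k)%N ->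
    pnorm (psub (u k) l) <= eps.

(* set-valued maps R^n =>> R^n: F x y means y in F(x) *)
Definition gph (F : vec -> vec -> Prop) : vec * vec -> Prop :=
  fun p => F p.1 p.2.

Definition closed_pset (A : vec * vec -> Prop) : Prop :=
  forall (zk : nat -> vec * vec) (z : vec * vec),
    (forall k, A (zk k)) -> pconv zk z -> A z.

Definition regular_normal (A : vec * vec -> Prop) (z v : vec * vec) : Prop :=
  A z /\
  forall eps : R, 0 < eps -> exists delta : R, 0 < delta /\
    forall z', A z' -> pnorm (psub z' z) <= delta ->
      pdot v (psub z' z) <= eps * pnorm (psub z' z).

Definition limiting_normal (A : vec * vec -> Prop) (z v : vec * vec) : Prop :=
  A z /\
  exists (zk vk : nat -> vec * vec),
    (forall k, A (zk k) /\ regular_normal A (zk k) (vk k)) /\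
    pconv zk z /\ pconv vk v.

Definition coderiv (G : vec -> vec -> Prop) (x y ystar xstar : vec) : Prop :=
  limiting_normal (gph G) (x, y) (xstar, - ystar).

Definition unif_semismooth_star (F : vec -> vec -> Prop)
    (W : vec * vec -> Prop) : Prop :=
  forall eps : R, 0 < eps -> exists delta : R, 0 < delta /\
    forall u z : vec, W (u, z) ->
    forall x y : vec, enorm (x - u) <= delta -> enorm (y - z) <= delta ->
    F x y ->
    forall ystar xstar : vec, coderiv F x y ystar xstar ->
      `|dot xstar (x - u) - dot ystar (y - z)|
        <= eps * pnorm (xstar, ystar) * pnorm (x - u, y - z).

Definition sum_map (f : R -> vec -> vec) (t : R) (F : vec -> vec -> Prop)
    : vec -> vec -> Prop :=
  fun x y => exists w, F x w /\ y = f t x + w.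

Definition in_T (T t : R) : Prop := 0 <= t /\ t <= T.

Definition cont_on (T : R) (xf : R -> vec) : Prop :=
  forall t, in_T T t -> forall eps : R, 0 < eps -> exists delta : R, 0 < delta /\
    forall s, in_T T s -> `|s - t| <= delta -> enorm (xf s - xf t) <= eps.

(* f : [0,T] x R^n -> R^n continuously differentiable: there is a derivative
   (partial in t: ft, partial in x: the matrix fx acting on row vectors)
   which is a Frechet derivative relative to [0,T] x R^n at every point and
   depends continuously on the point. *)
Definition C1_on (T : R) (f : R -> vec -> vec) : Prop :=
  exists (ft : R -> vec -> vec) (fx : R -> vec -> 'M[R]_n),
    (forall t x, in_T T t ->
       forall eps : R, 0 < eps -> exists delta : R, 0 < delta /\
         forall s y, in_T T s -> `|s - t| <= delta -> enorm (y - x) <= delta ->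
           enorm (f s y - f t x - (s - t) *: ft t x - (y - x) *m fx t x)
             <= eps * Num.max `|s - t| (enorm (y - x))) /\
    (forall t x, in_T T t ->
       forall eps : R, 0 < eps -> exists delta : R, 0 < delta /\
         forall s y, in_T T s -> `|s - t| <= delta -> enorm (y - x) <= delta ->
           enorm (ft s y - ft t x) <= eps /\
           forall i j, `|fx s y i j - fx t x i j| <= eps).

End Defs.

(* The graph of x => f(t,x) + F(x) is the graph of F moved by the C^1 map
   (x, w) |-> (x, f(t,x) + w), so whenever (ystar, xstar) is a coderivative
   pair of f(t,.) + F at (x, y), (ystar, xstar - D_x f(t,x)^T ystar) is one of F
   at (x, y - f(t,x)).  Applying the uniform semismoothness of F at (x(t), -f(t,x(t)))
   to this point and pair yields the estimate up to the term <ystar, r> with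
   r = f(t,x) - f(t,x(t)) - D_x f(t,x)(x - x(t)), and up to constants comparing
   the norms of the moved and original pairs.  By compactness of [0,T] (real
   induction), D_x f is bounded and uniformly continuous on a tube around the
   trajectory, so the mean value inequality gives |r| = o(|x - x(t)|) uniformly
   in t. *)

From HB Require Import structures.
From mathcomp Require Import all_boot all_order all_algebra.
From mathcomp Require Import classical_sets reals.
From mathcomp Require Import ring lra.
Import Order.TTheory GRing.Theory Num.Theory.
Local Open Scope ring_scope.
Set Implicit Arguments. Unset Strict Implicit. Unset Printing Implicit Defensive.

Section Euclidean.
Context {R : realType} {n : nat}.
Local Notation vec := 'rV[R]_n.
Implicit Types (u v w : vec) (A B : 'M[R]_n).

Lemma dotC u v : dot u v = dot v u.
Proof. by apply: eq_bigr => i _; rewrite mulrC. Qed.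

Lemma dotDr u v w : dot u (v + w) = dot u v + dot u w.
Proof. by rewrite /dot -big_split; apply: eq_bigr => i _; rewrite mxE mulrDr. Qed.

Lemma dotDl u v w : dot (v + w) u = dot v u + dot w u.
Proof. by rewrite dotC dotDr !(dotC u). Qed.

Lemma dotNr u v : dot u (- v) = - dot u v.
Proof. by rewrite /dot -sumrN; apply: eq_bigr => i _; rewrite mxE mulrN. Qed.

Lemma dotNl u v : dot (- u) v = - dot u v.
Proof. by rewrite dotC dotNr dotC. Qed.

Lemma dotBr u v w : dot u (v - w) = dot u v - dot u w.
Proof. by rewrite dotDr dotNr. Qed.

Lemma dotBl u v w : dot (v - w) u = dot v u - dot w u.
Proof. by rewrite dotDl dotNl. Qed.

Lemma dotZr (a : R) u v : dot u (a *: v) = a * dot u v.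
Proof. by rewrite /dot mulr_sumr; apply: eq_bigr => i _; rewrite mxE mulrCA. Qed.

Lemma dotZl (a : R) u v : dot (a *: u) v = a * dot u v.
Proof. by rewrite dotC dotZr dotC. Qed.

Lemma dot0l u : dot 0 u = 0.
Proof. by rewrite /dot big1 // => i _; rewrite mxE mul0r. Qed.

Lemma dot0r u : dot u 0 = 0.
Proof. by rewrite dotC dot0l. Qed.

Lemma dot_ge0 u : 0 <= dot u u.
Proof. by apply: sumr_ge0 => i _; rewrite -expr2 sqr_ge0. Qed.

Lemma dot_eq0 u : dot u u = 0 -> u = 0.
Proof.
move=> /eqP; rewrite psumr_eq0 => [/allP u0|i _]; last by rewrite -expr2 sqr_ge0.
apply/rowP => i; have /= := u0 i (mem_index_enum i).
by rewrite mulf_eq0 orbb mxE => /eqP.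
Qed.

Lemma enorm_ge0 u : 0 <= enorm u.
Proof. exact: sqrtr_ge0. Qed.

Lemma enorm_sqr u : enorm u ^+ 2 = dot u u.
Proof. by rewrite sqr_sqrtr // dot_ge0. Qed.

Lemma enorm_eq0 u : enorm u = 0 -> u = 0.
Proof. by move=> u0; apply: dot_eq0; rewrite -enorm_sqr u0 expr0n. Qed.

Lemma enorm0 : enorm (0 : vec) = 0.
Proof. by rewrite /enorm dot0r sqrtr0. Qed.

Lemma enormN u : enorm (- u) = enorm u.
Proof. by rewrite /enorm dotNl dotNr opprK. Qed.

Lemma enorm_distC u v : enorm (u - v) = enorm (v - u).
Proof. by rewrite -enormN opprB. Qed.

Lemma enormZ (a : R) u : enorm (a *: u) = `|a| * enorm u.
Proof. by rewrite /enorm dotZl dotZr mulrA -expr2 sqrtrM ?sqr_ge0 // sqrtr_sqr. Qed.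

Lemma dot_le_enorm u v : dot u v <= enorm u * enorm v.
Proof.
have [/enorm_eq0 ->|u0] := eqVneq (enorm u) 0; first by rewrite dot0l enorm0 mul0r.
have [/enorm_eq0 ->|v0] := eqVneq (enorm v) 0; first by rewrite dot0r enorm0 mulr0.
set a := enorm u; set b := enorm v.
have a0 : 0 < a by rewrite lt_def u0 enorm_ge0.
have b0 : 0 < b by rewrite lt_def v0 enorm_ge0.
(* sum the coordinatewise inequalities [0 <= (b u_i - a v_i)^2] *)
have : 2 * (a * b) * dot u v <= b ^+ 2 * dot u u + a ^+ 2 * dot v v.
  rewrite /dot !mulr_sumr -big_split /=; apply: ler_sum => i _.
  have := sqr_ge0 (b * u 0 i - a * v 0 i); nra.
rewrite -!enorm_sqr -/a -/b => ab_le.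
by rewrite -(@ler_pM2l _ (2 * (a * b))) ?mulr_gt0 //; nra.
Qed.

Lemma Cauchy_Schwarz u v : `|dot u v| <= enorm u * enorm v.
Proof.
rewrite ler_norml dot_le_enorm andbT.
by rewrite -(enormN v) -[dot u v]opprK -dotNr lerN2 dot_le_enorm.
Qed.

Lemma enormD u v : enorm (u + v) <= enorm u + enorm v.
Proof.
rewrite -(@ler_sqr _ (enorm (u + v))) ?nnegrE ?addr_ge0 ?enorm_ge0 //.
rewrite enorm_sqr dotDl !dotDr (dotC v u) sqrrD !enorm_sqr.
have := dot_le_enorm u v; lra.
Qed.

Lemma enormB u v : enorm (u - v) <= enorm u + enorm v.
Proof. by rewrite -(enormN v) enormD. Qed.

Lemma enorm_coord u i : `|u 0 i| <= enorm u.
Proof.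
rewrite -sqrtr_sqr ler_sqrt ?dot_ge0 // /dot (bigD1 i) //= expr2 lerDl.
by apply: sumr_ge0 => j _; rewrite -expr2 sqr_ge0.
Qed.

Lemma enorm_le_sum u : enorm u <= \sum_i `|u 0 i|.
Proof.
rewrite -(@ler_sqr _ (enorm u)) ?nnegrE ?enorm_ge0 ?sumr_ge0 // enorm_sqr.
rewrite [X in _ <= X]expr2 /dot mulr_sumr ler_sum // => i _.
rewrite (le_trans (ler_norm _)) // normrM ler_wpM2r //.
by rewrite (bigD1 i) //= lerDl sumr_ge0.
Qed.

(* Dominates the operator norm and is trivially bounded entrywise. *)
Definition mnorm A : R := \sum_i \sum_j `|A i j|.

Lemma mnorm_ge0 A : 0 <= mnorm A.
Proof. by apply: sumr_ge0 => i _; apply: sumr_ge0. Qed.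

Lemma mnormD A B : mnorm (A + B) <= mnorm A + mnorm B.
Proof.
rewrite /mnorm -big_split ler_sum // => i _.
by rewrite -big_split ler_sum // => j _; rewrite mxE ler_normD.
Qed.

Lemma mnorm_distC A B : mnorm (A - B) = mnorm (B - A).
Proof. by apply: eq_bigr => i _; apply: eq_bigr => j _; rewrite !mxE distrC. Qed.

Lemma mnorm_tr A : mnorm A^T = mnorm A.
Proof. by rewrite /mnorm exchange_big; do 2!apply: eq_bigr => ? _; rewrite mxE. Qed.

Lemma mnorm_le_entries A (e : R) :
  (forall i j, `|A i j| <= e) -> mnorm A <= (n ^ 2)%:R * e.
Proof.
move=> Ae; rewrite natrX expr2 -mulrA.
have -> : n%:R * (n%:R * e) = \sum_(i < n) \sum_(j < n) e.
  by rewrite !sumr_const !card_ord !mulr_natl.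
by do 2!apply: ler_sum => ? _.
Qed.

Lemma enorm_mulmx u A : enorm (u *m A) <= mnorm A * enorm u.
Proof.
apply: (le_trans (enorm_le_sum _)).
rewrite /mnorm exchange_big /= mulr_suml ler_sum // => j _.
rewrite mxE mulr_suml (le_trans (ler_norm_sum _ _ _)) // ler_sum // => i _.
by rewrite normrM mulrC ler_wpM2l ?enorm_coord.
Qed.

Lemma dot_mulmx_tr u v A : dot (u *m A^T) v = dot u (v *m A).
Proof.
rewrite /dot; under eq_bigr => i _ do rewrite mxE mulr_suml.
rewrite exchange_big; apply: eq_bigr => j _ /=.
by rewrite mxE mulr_sumr; apply: eq_bigr => i _; rewrite mxE mulrA mulrAC.
Qed.

Lemma pnorm_ge0 (p : vec * vec) : 0 <= pnorm p.
Proof. by rewrite le_max enorm_ge0. Qed.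

Lemma pnorm_l u v : enorm u <= pnorm (u, v).
Proof. by rewrite le_max lexx. Qed.

Lemma pnorm_r u v : enorm v <= pnorm (u, v).
Proof. by rewrite le_max lexx orbT. Qed.

Lemma pnorm_le (p : vec * vec) (e : R) :
  pnorm p <= e <-> enorm p.1 <= e /\ enorm p.2 <= e.
Proof. by rewrite ge_max; split => [/andP//|[-> ->]]. Qed.

Lemma pdot_shift (A : 'M[R]_n) (a b h k : vec) :
  pdot (a + b *m A^T, b) (h, k) = pdot (a, b) (h, h *m A + k).
Proof. by rewrite /pdot /= dotDl dot_mulmx_tr dotDr addrA. Qed.

Lemma pnorm_adjoint_le (M : 'M[R]_n) (xs ys : vec) :
  pnorm (xs - ys *m M^T, ys) <= (1 + mnorm M) * pnorm (xs, ys).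
Proof.
have := pnorm_ge0 (xs, ys); have := pnorm_l xs ys; have := pnorm_r xs ys.
have := mnorm_ge0 M; have := enorm_mulmx ys M^T.
rewrite mnorm_tr pnorm_le /= => ysM M0 ysP xsP P0.
split; last by nra.
by rewrite (le_trans (enormB _ _)) //; nra.
Qed.

Lemma pnorm_shift_le (M : 'M[R]_n) (h k r : vec) : enorm r <= enorm h ->
  pnorm (h, k - r - h *m M) <= (2 + mnorm M) * pnorm (h, k).
Proof.
have := pnorm_ge0 (h, k); have := pnorm_l h k; have := pnorm_r h k.
have := mnorm_ge0 M; have := enorm_mulmx h M.
rewrite pnorm_le /= => hM M0 kP hP Q0 rh.
split; first by nra.
rewrite (le_trans (enormB _ _)) // (le_trans (lerD (enormB _ _) (lexx _))) //.
nra.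
Qed.

Lemma dot_estimate_shift (M : 'M[R]_n) (xs ys h k r : vec) (K eta c : R) :
  mnorm M <= K -> 0 <= c -> 0 <= eta <= 1 -> enorm r <= eta * enorm h ->
  `|dot (xs - ys *m M^T) h - dot ys (k - r - h *m M)|
    <= c * pnorm (xs - ys *m M^T, ys) * pnorm (h, k - r - h *m M) ->
  `|dot xs h - dot ys k| <= (c * ((1 + K) * (2 + K)) + eta) * pnorm (xs, ys) * pnorm (h, k).
Proof.
move=> MK c0 /andP[eta0 eta1] rh est.
set P := pnorm (xs, ys); set Q := pnorm (h, k).
have [P0 Q0] : 0 <= P /\ 0 <= Q by split; apply: pnorm_ge0.
have M0 := mnorm_ge0 M.
have rh' : enorm r <= enorm h by have := enorm_ge0 h; nra.
have est_le : c * pnorm (xs - ys *m M^T, ys) * pnorm (h, k - r - h *m M)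
    <= c * ((1 + K) * (2 + K)) * P * Q.
  have AB : pnorm (xs - ys *m M^T, ys) * pnorm (h, k - r - h *m M)
      <= ((1 + K) * P) * ((2 + K) * Q).
    apply: ler_pM; rewrite ?pnorm_ge0 //.
      by rewrite (le_trans (pnorm_adjoint_le M xs ys)) // ler_wpM2r // lerD2l.
    by rewrite (le_trans (pnorm_shift_le M k rh')) // ler_wpM2r // lerD2l.
  have -> : c * ((1 + K) * (2 + K)) * P * Q = c * ((1 + K) * P * ((2 + K) * Q)).
    by ring.
  by rewrite -mulrA ler_wpM2l.
have ysr : `|dot ys r| <= eta * P * Q.
  rewrite (le_trans (Cauchy_Schwarz _ _)) //.
  rewrite (le_trans (ler_pM (enorm_ge0 _) (enorm_ge0 _) (pnorm_r xs ys) rh)) //.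
  by rewrite mulrCA mulrA ler_wpM2l ?mulr_ge0 ?pnorm_l.
have E : dot (xs - ys *m M^T) h - dot ys (k - r - h *m M) = dot xs h - dot ys k + dot ys r.
  by rewrite dotBl dot_mulmx_tr !dotBr; lra.
have := ler_normD (dot xs h - dot ys k + dot ys r) (- dot ys r).
by rewrite addrK normrN -E; lra.
Qed.

End Euclidean.

Section RealInduction.
Context {R : realType}.

Lemma real_induction (a b : R) (P : R -> Prop) :
  a <= b ->
  (forall c, a <= c <= b -> (forall s, a <= s < c -> P s) ->
     exists2 r, 0 < r & forall s, a <= s <= b -> s <= c + r -> P s) ->
  forall s, a <= s <= b -> P s.
Proof.
move=> ab step.
pose S c := a <= c <= b /\ forall s, a <= s < c -> P s.
have Sa : S a by split=> [|s]; [rewrite lexx | lra].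
have supS : has_sup S by split; [exists a | exists b => c [/andP[]]].
have aS : a <= sup S by apply: sup_upper_bound.
have Sb : sup S <= b by apply: ge_sup; [exists a | move=> c [/andP[]]].
have below : forall s, a <= s < sup S -> P s.
  move=> s /andP[sa ss].
  have [c [_ Pc] sc] : exists2 c, S c & sup S - (sup S - s) < c.
    by apply: sup_adherent supS; rewrite subr_gt0.
  by apply: Pc; rewrite sa /=; lra.
have [|r r0 Pr] := step (sup S) _ below; first by rewrite aS.
have [br|rb] := lerP b (sup S + r); first by move=> s /andP[? ?]; apply: Pr; lra.
have : S (sup S + r) by split=> [|s /andP[? ?]]; [|apply: Pr]; lra.
by move/(sup_upper_bound supS); lra.
Qed.

Lemma uniform_radius (T : R) (H : R -> R -> Prop) :
  0 <= T ->
  (forall t d d', 0 < d' <= d -> H t d -> H t d') ->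
  (forall t0, in_T T t0 ->
     exists2 r, 0 < r & forall t, in_T T t -> `|t - t0| <= r -> H t r) ->
  exists2 d, 0 < d & forall t, in_T T t -> H t d.
Proof.
move=> T0 Hanti loc.
pose P c := exists2 d, 0 < d & forall t, 0 <= t <= c -> H t d.
suff [d d0 Hd] : P T by exists d => // t [t0 tT]; apply: Hd; rewrite t0.
apply: (@real_induction 0 T P T0 _ T); last by rewrite T0 lexx.
move=> c /andP[c0 cT] Pbelow; have [r r0 Hr] := loc c (conj c0 cT).
have near_c t : 0 <= t <= T -> c - r <= t <= c + r -> H t r.
  move=> /andP[t0 tT] /andP[tl tr]; apply: Hr; first by split.
  by rewrite ler_norml; apply/andP; split; lra.
exists r => // s /andP[s0 sT] scr.
have [cr|rc] := lerP c r.
  by exists r => // t /andP[t0 ts]; apply: near_c; apply/andP; split; lra.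
have [d d0 Hd] := Pbelow (c - r) ltac:(apply/andP; split; lra).
exists (Num.min d r) => [|t /andP[t0 ts]]; first by rewrite lt_min d0.
have [tcr|crt] := lerP t (c - r).
  by apply: (Hanti t d); [rewrite lt_min d0 r0 ge_min lexx | apply: Hd; rewrite t0].
apply: (Hanti t r); first by rewrite lt_min d0 r0 ge_min lexx orbT.
by apply: near_c; apply/andP; split; lra.
Qed.

Lemma lipschitz_of_local (n : nat) (g : R -> 'rV[R]_n) (a b L : R) :
  a <= b ->
  (forall s, a <= s <= b -> exists2 r, 0 < r & forall s', a <= s' <= b ->
     `|s' - s| <= r -> enorm (g s' - g s) <= L * `|s' - s|) ->
  enorm (g b - g a) <= L * (b - a).
Proof.
move=> ab loc.
pose P c := enorm (g c - g a) <= L * (c - a).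
have chain s t : P s -> enorm (g t - g s) <= L * (t - s) -> P t.
  rewrite /P => Ps Pst; have := enormD (g t - g s) (g s - g a).
  by rewrite addrA subrK; lra.
apply: (@real_induction a b P ab _ b); last by rewrite ab lexx.
move=> c cab Pbelow; have [r r0 Hr] := loc c cab.
have right_c t : a <= t <= b -> c <= t <= c + r -> enorm (g t - g c) <= L * (t - c).
  move=> tab /andP[ct tcr]; rewrite -[t - c]ger0_norm ?subr_ge0 //.
  by apply: Hr; rewrite // ger0_norm ?subr_ge0 //; lra.
have left_c s : a <= s <= b -> c - r <= s <= c -> enorm (g c - g s) <= L * (c - s).
  move=> sab /andP[crs sc]; rewrite enorm_distC -[c - s]ger0_norm ?subr_ge0 //.
  by rewrite distrC; apply: Hr; rewrite // distrC ger0_norm ?subr_ge0 //; lra.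
case/andP: cab => ac cb.
have Pc : P c.
  have [car|rca] := lerP (c - a) r.
    apply: (chain a); first by rewrite /P subrr enorm0 subrr mulr0.
    by apply: left_c; rewrite ?lexx ?ab ?ac //; apply/andP; split; lra.
  have crab : a <= c - r <= b by apply/andP; split; lra.
  apply: (chain (c - r)); first by apply: Pbelow; apply/andP; split; lra.
  by apply: left_c => //; rewrite lexx /=; lra.
exists r => // s /andP[sa sb] scr.
have [sc|cs] := ltrP s c; first by apply: Pbelow; rewrite sa.
by apply: (chain c) => //; apply: right_c; rewrite ?sa ?sb ?cs.
Qed.

End RealInduction.

Section Sequences.
Context {R : realType} {n : nat}.
Local Notation vec := 'rV[R]_n.

Definition cvg_wrt {V : zmodType} (N : V -> R) (u : nat -> V) (l : V) : Prop :=
  forall eps, 0 < eps -> exists K, forall k, (K <= k)%N -> N (u k - l) <= eps.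

Lemma cvg_wrt_max {V W : zmodType} (N1 : V -> R) (N2 : W -> R) u v a b (e1 e2 : R) :
  0 < e1 -> 0 < e2 -> cvg_wrt N1 u a -> cvg_wrt N2 v b ->
  exists K, forall k, (K <= k)%N -> N1 (u k - a) <= e1 /\ N2 (v k - b) <= e2.
Proof.
move=> e10 e20 /(_ _ e10) [K1 uK] /(_ _ e20) [K2 vK].
exists (maxn K1 K2) => k; rewrite geq_max => /andP[k1 k2].
by split; [apply: uK | apply: vK].
Qed.

Lemma pconvP (u : nat -> vec * vec) (l : vec * vec) :
  pconv u l <->
  cvg_wrt enorm (fun k => (u k).1) l.1 /\ cvg_wrt enorm (fun k => (u k).2) l.2.
Proof.
split=> [ul|[u1 u2] e e0].
  by split=> e /ul [K uK]; exists K => k /uK /pnorm_le[].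
have [K uK] := cvg_wrt_max e0 e0 u1 u2.
by exists K => k /uK; rewrite pnorm_le.
Qed.

Lemma cvg_wrt_comp {W : zmodType} (N : W -> R) (phi : vec -> W) (u : nat -> vec) (x : vec) :
  (forall eps, 0 < eps -> exists2 d, 0 < d &
     forall y, enorm (y - x) <= d -> N (phi y - phi x) <= eps) ->
  cvg_wrt enorm u x -> cvg_wrt N (fun k => phi (u k)) (phi x).
Proof.
move=> phi_cont ux e /phi_cont [d d0 phid].
by have [K uK] := ux d d0; exists K => k /uK /phid.
Qed.

Lemma cvg_enormD (u v : nat -> vec) (a b : vec) :
  cvg_wrt enorm u a -> cvg_wrt enorm v b ->
  cvg_wrt enorm (fun k => u k + v k) (a + b).
Proof.
move=> ua vb e e0; have e20 : 0 < e / 2 by rewrite divr_gt0.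
have [K uvK] := cvg_wrt_max e20 e20 ua vb; exists K => k /uvK[uk vk].
rewrite opprD addrACA (le_trans (enormD _ _)) //; lra.
Qed.

Lemma cvg_enormN (u : nat -> vec) (a : vec) :
  cvg_wrt enorm u a -> cvg_wrt enorm (fun k => - u k) (- a).
Proof. by move=> ua e /ua[K uK]; exists K => k /uK; rewrite -opprD enormN. Qed.

Lemma cvg_mnorm_tr (M : nat -> 'M[R]_n) (A : 'M[R]_n) :
  cvg_wrt mnorm M A -> cvg_wrt mnorm (fun k => (M k)^T) A^T.
Proof. by move=> MA e /MA[K MK]; exists K => k /MK; rewrite -linearB mnorm_tr. Qed.

Lemma cvg_mulmx (u : nat -> vec) (M : nat -> 'M[R]_n) (b : vec) (A : 'M[R]_n) :
  cvg_wrt enorm u b -> cvg_wrt mnorm M A ->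
  cvg_wrt enorm (fun k => u k *m M k) (b *m A).
Proof.
move=> ub MA e e0.
set bb := enorm b; have bb0 : 0 <= bb := enorm_ge0 b; have A0 := mnorm_ge0 A.
have e1 : 0 < e / (2 * (mnorm A + 1)) by rewrite divr_gt0 //; lra.
have q0 : 0 < e / (2 * (bb + 1)) by rewrite divr_gt0 //; lra.
have e2 : 0 < Num.min 1 (e / (2 * (bb + 1))) by rewrite lt_min ltr01.
have [K uMK] := cvg_wrt_max e1 e2 ub MA; exists K => k /uMK[uk Mk].
have Mk1 : mnorm (M k - A) <= 1 by rewrite (le_trans Mk) // ge_min lexx.
have Mk2 : mnorm (M k - A) <= e / (2 * (bb + 1)) by rewrite (le_trans Mk) // ge_min lexx orbT.
have MkA : mnorm (M k) <= mnorm A + 1.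
  by have := mnormD A (M k - A); rewrite addrC subrK; lra.
have -> : u k *m M k - b *m A = (u k - b) *m M k + b *m (M k - A).
  by rewrite mulmxBl mulmxBr addrA subrK.
apply: (le_trans (enormD _ _)).
have h1 : enorm ((u k - b) *m M k) <= e / 2.
  apply: (le_trans (enorm_mulmx _ _)).
  have : (mnorm A + 1) * (e / (2 * (mnorm A + 1))) = e / 2 by field; lra.
  by have := enorm_ge0 (u k - b); nra.
have h2 : enorm (b *m (M k - A)) <= e / 2.
  apply: (le_trans (enorm_mulmx _ _)); rewrite -/bb.
  have : (bb + 1) * (e / (2 * (bb + 1))) = e / 2 by field; lra.
  by have := mnorm_ge0 (M k - A); nra.
lra.
Qed.

End Sequences.

Section SumRule.
Context {R : realType} {n : nat}.
Local Notation vec := 'rV[R]_n.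

Definition frechet_derivative (g : vec -> vec) (Dg : vec -> 'M[R]_n) : Prop :=
  forall x eps, 0 < eps -> exists2 d, 0 < d & forall y, enorm (y - x) <= d ->
    enorm (g y - g x - (y - x) *m Dg x) <= eps * enorm (y - x).

Definition mx_continuous_at (Dg : vec -> 'M[R]_n) (x : vec) : Prop :=
  forall eps, 0 < eps -> exists2 d, 0 < d &
    forall y, enorm (y - x) <= d -> mnorm (Dg y - Dg x) <= eps.

Definition semismooth_estimate_at (F : vec -> vec -> Prop) (u z : vec) (c d : R) : Prop :=
  forall x y, enorm (x - u) <= d -> enorm (y - z) <= d -> F x y ->
  forall ystar xstar, coderiv F x y ystar xstar ->
    `|dot xstar (x - u) - dot ystar (y - z)|
      <= c * pnorm (xstar, ystar) * pnorm (x - u, y - z).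

Variables (f : R -> vec -> vec) (t : R) (Df : vec -> 'M[R]_n).
Variable F : vec -> vec -> Prop.

Lemma gph_sum_map x y : gph (sum_map f t F) (x, y) -> F x (y - f t x).
Proof. by case=> w [Fxw /= ->]; rewrite addrC addKr. Qed.

Hypothesis fD : frechet_derivative (f t) Df.

Lemma lipschitz_near x : exists2 d, 0 < d & forall y, enorm (y - x) <= d ->
  enorm (f t y - f t x) <= (mnorm (Df x) + 1) * enorm (y - x).
Proof.
have [d d0 fd] := fD x ltr01; exists d => // y /fd yx.
rewrite -[f t y - f t x](subrK ((y - x) *m Df x)) (le_trans (enormD _ _)) //.
by have := enorm_mulmx (y - x) (Df x); lra.
Qed.

Lemma continuous_near x (eps : R) : 0 < eps -> exists2 d, 0 < d &
  forall y, enorm (y - x) <= d -> enorm (f t y - f t x) <= eps.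
Proof.
move=> e0; have [d d0 lip] := lipschitz_near x; set L := mnorm (Df x) + 1.
have L0 : 0 < L by rewrite /L; have := mnorm_ge0 (Df x); lra.
exists (Num.min d (eps / L)) => [|y]; first by rewrite lt_min d0 divr_gt0.
rewrite le_min => /andP[/lip yx_lip yx]; apply: (le_trans yx_lip).
by rewrite -ler_pdivlMl // mulrC.
Qed.

Lemma mean_value_le u x (M : 'M[R]_n) (eta : R) :
  (forall s, 0 <= s <= 1 -> mnorm (Df (u + s *: (x - u)) - M) <= eta) ->
  enorm (f t x - f t u - (x - u) *m M) <= eta * enorm (x - u).
Proof.
move=> DfM; apply/ler_addgt0Pr => e e0.
set D := x - u; have D0 := enorm_ge0 D.
set q := e / (enorm D + 1); have q0 : 0 < q by rewrite divr_gt0 //; lra.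
pose g s := f t (u + s *: D) - s *: (D *m M).
have -> : f t x - f t u - D *m M = g 1 - g 0.
  by rewrite /g !scale1r !scale0r addr0 subr0 /D [u + _]addrC subrK addrAC.
apply: (le_trans (@lipschitz_of_local _ _ g 0 1 ((q + eta) * enorm D) ler01 _)).
  move=> s s01; set xi := u + s *: D; have [d d0 fd] := fD xi q0.
  exists (d / (enorm D + 1)) => [|s' _ ss']; first by rewrite divr_gt0 //; lra.
  have dxi : u + s' *: D - xi = (s' - s) *: D.
    by rewrite /xi opprD addrACA subrr add0r -scalerBl.
  have -> : g s' - g s = (f t (u + s' *: D) - f t xi - (u + s' *: D - xi) *m Df xi)
                         + (u + s' *: D - xi) *m (Df xi - M).
    rewrite dxi mulmxBr addrA subrK /g -/xi -scalemxAl scalerBl.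
    by set W := D *m M; apply/rowP => i; rewrite !mxE; ring.
  have nxi : enorm (u + s' *: D - xi) = `|s' - s| * enorm D by rewrite dxi enormZ.
  have hxi : enorm (u + s' *: D - xi) <= d.
    have : d / (enorm D + 1) * (enorm D + 1) = d by field; lra.
    by rewrite nxi; have := normr_ge0 (s' - s); nra.
  apply: (le_trans (enormD _ _)).
  have := fd _ hxi; have := enorm_mulmx (u + s' *: D - xi) (Df xi - M); rewrite nxi.
  have : mnorm (Df xi - M) * (`|s' - s| * enorm D) <= eta * (`|s' - s| * enorm D).
    by apply: ler_wpM2r; [rewrite mulr_ge0 | exact: DfM].
  lra.
have : q * (enorm D + 1) = e by rewrite /q; field; lra.
nra.
Qed.

Lemma graph_shift_lipschitz x : exists2 d, 0 < d & forall x' k, enorm (x' - x) <= d ->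
  pnorm (x' - x, f t x' - f t x + k) <= (mnorm (Df x) + 2) * pnorm (x' - x, k).
Proof.
have [d d0 lip] := lipschitz_near x; exists d => // x' k /lip fx'.
have := pnorm_l (x' - x) k; have := pnorm_r (x' - x) k; have := mnorm_ge0 (Df x).
have := enorm_ge0 (x' - x); rewrite pnorm_le /= => h0 M0 kp hp.
split; first by nra.
by rewrite (le_trans (enormD _ _)) //; nra.
Qed.

Lemma regular_normal_sum_map x y a b :
  regular_normal (gph (sum_map f t F)) (x, y) (a, b) ->
  regular_normal (gph F) (x, y - f t x) (a + b *m (Df x)^T, b).
Proof.
move=> [Gxy regG]; split; first exact: gph_sum_map.
move=> eps e0; set B := mnorm (Df x) + 2; set bb := enorm b.
have B0 : 0 < B by rewrite /B; have := mnorm_ge0 (Df x); lra.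
have bb0 : 0 <= bb := enorm_ge0 b.
have eta0 : 0 < eps / (2 * (bb + 1)) by rewrite divr_gt0 //; lra.
have e10 : 0 < eps / (2 * B) by rewrite divr_gt0 //; lra.
have [dL dL0 lip] := graph_shift_lipschitz x.
have [dF dF0 fr] := fD x eta0.
have [dG [dG0 reg]] := regG _ e10.
exists (Num.min dL (Num.min dF (dG / B))); split=> [|[x' w'] Fx'w'].
  by rewrite !lt_min dL0 dF0 divr_gt0.
rewrite /psub /= !le_min => /andP[pL /andP[pF pG]].
set h := x' - x; set k := w' - (y - f t x); set p := pnorm (h, k) in pL pF pG *.
have hp : enorm h <= p := pnorm_l h k.
have shift : f t x' + w' - y = f t x' - f t x + k.
  by rewrite /k; apply/rowP => i; rewrite !mxE; ring.
have shift_le : pnorm (h, f t x' + w' - y) <= B * p.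
  by rewrite shift; exact: lip x' k (le_trans hp pL).
have G' : gph (sum_map f t F) (x', f t x' + w') by exists w'.
have near : pnorm (h, f t x' + w' - y) <= dG.
  by rewrite (le_trans shift_le) // -ler_pdivlMl // mulrC.
have reg_le : pdot (a, b) (h, f t x' + w' - y) <= eps / 2 * p.
  rewrite (le_trans (reg _ G' near)) //.
  have -> : eps / 2 * p = eps / (2 * B) * (B * p) by field; lra.
  by rewrite ler_wpM2l ?divr_ge0 //; lra.
set r := f t x' - f t x - h *m Df x.
have r_le : `|dot b r| <= eps / 2 * p.
  apply: (le_trans (Cauchy_Schwarz _ _)); rewrite -/bb.
  have := fr x' (le_trans hp pF); rewrite -/h -/r => rh.
  have : bb * (eps / (2 * (bb + 1))) + eps / (2 * (bb + 1)) = eps / 2.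
    by field; lra.
  have := enorm_ge0 r; have := enorm_ge0 h; nra.
have E : f t x' + w' - y = (h *m Df x + k) + r.
  by rewrite shift /r; set H := h *m Df x; apply/rowP => i; rewrite !mxE; ring.
move: reg_le r_le; rewrite E pdot_shift /pdot /= [dot b (_ + r)]dotDr ler_norml; lra.
Qed.

Lemma coderiv_sum_map x y ystar xstar :
  mx_continuous_at Df x ->
  coderiv (sum_map f t F) x y ystar xstar ->
  coderiv F x (y - f t x) ystar (xstar - ystar *m (Df x)^T).
Proof.
move=> Df_cont [Gxy [zk [vk [zv_reg [/pconvP[z1 z2] /pconvP[v1 v2]]]]]].
split; first exact: gph_sum_map.
exists (fun k => ((zk k).1, (zk k).2 - f t (zk k).1)).
exists (fun k => ((vk k).1 + (vk k).2 *m (Df (zk k).1)^T, (vk k).2)).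
split; [|split; apply/pconvP; split=> //=].
- move=> k; have [_ reg] := zv_reg k.
  rewrite [zk k]surjective_pairing [vk k]surjective_pairing in reg.
  by have /regular_normal_sum_map[? ?] := reg; split.
- apply: cvg_enormD z2 (cvg_enormN _).
  exact: cvg_wrt_comp (continuous_near x) z1.
- rewrite -mulNmx; apply: cvg_enormD v1 (cvg_mulmx v2 (cvg_mnorm_tr _)).
  exact: cvg_wrt_comp Df_cont z1.
Qed.

Lemma sum_map_semismooth_estimate u x y ystar xstar (K eta c d : R) :
  mx_continuous_at Df x ->
  semismooth_estimate_at F u (- f t u) c d ->
  mnorm (Df x) <= K -> 0 <= c -> 0 <= eta <= 1 ->
  enorm (f t x - f t u - (x - u) *m Df x) <= eta * enorm (x - u) ->
  (2 + K) * pnorm (x - u, y) <= d ->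
  sum_map f t F x y -> coderiv (sum_map f t F) x y ystar xstar ->
  `|dot xstar (x - u) - dot ystar y|
    <= (c * ((1 + K) * (2 + K)) + eta) * pnorm (xstar, ystar) * pnorm (x - u, y).
Proof.
move=> Df_cont ssF DfK c0 /andP[eta0 eta1] rem near Gxy cod.
set r := f t x - f t u - (x - u) *m Df x in rem.
have rh : enorm r <= enorm (x - u) by have := enorm_ge0 (x - u); nra.
have shift : y - f t x - - f t u = y - r - (x - u) *m Df x.
  by rewrite /r; set H := _ *m _; apply/rowP => i; rewrite !mxE; ring.
have /pnorm_le[/= xu_d yz_d] : pnorm (x - u, y - r - (x - u) *m Df x) <= d.
  rewrite (le_trans (pnorm_shift_le _ _ rh)) // (le_trans _ near) //.
  by rewrite ler_wpM2r ?pnorm_ge0 // lerD2l.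
rewrite -shift in yz_d.
apply: dot_estimate_shift DfK c0 _ rem _; first by rewrite eta0.
rewrite -shift; apply: ssF xu_d yz_d (gph_sum_map Gxy) _ _ _.
exact: coderiv_sum_map cod.
Qed.

End SumRule.

Section Trajectory.
Context {R : realType} {n : nat}.
Local Notation vec := 'rV[R]_n.

Definition jointly_continuous_on (T : R) (fx : R -> vec -> 'M[R]_n) : Prop :=
  forall t x, in_T T t -> forall eps, 0 < eps -> exists2 d, 0 < d &
    forall s y, in_T T s -> `|s - t| <= d -> enorm (y - x) <= d ->
      mnorm (fx s y - fx t x) <= eps.

Lemma C1_on_partial (T : R) (f : R -> vec -> vec) : C1_on T f ->
  exists fx : R -> vec -> 'M[R]_n,
    (forall t, in_T T t -> frechet_derivative (f t) (fx t)) /\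
    jointly_continuous_on T fx.
Proof.
move=> [ft [fx [fdiff fcont]]]; exists fx; split.
  move=> t tT x eps /(fdiff t x tT)[d [d0 fd]]; exists d => // y yx.
  have := fd t y tT; rewrite subrr normr0 scale0r subr0 max_r ?enorm_ge0 //.
  by apply=> //; apply: ltW.
move=> t x tT eps e0; set N := (n ^ 2)%:R : R.
have N0 : 0 <= N by [].
have e'0 : 0 < eps / (N + 1) by rewrite divr_gt0 //; lra.
have [d [d0 fd]] := fcont t x tT _ e'0.
exists d => // s y sT st yx.
have entries i j : `|(fx s y - fx t x) i j| <= eps / (N + 1).
  by rewrite !mxE; apply: (fd s y sT st yx).2.
apply: (le_trans (mnorm_le_entries entries)).
have : N * (eps / (N + 1)) + eps / (N + 1) = eps by field; lra.
lra.
Qed.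

Lemma jointly_continuous_at (T t : R) (fx : R -> vec -> 'M[R]_n) x :
  jointly_continuous_on T fx -> in_T T t -> mx_continuous_at (fx t) x.
Proof.
move=> fx_cont tT eps /(fx_cont t x tT)[d d0 fxd]; exists d => // y.
by apply: fxd; rewrite // subrr normr0 ltW.
Qed.

Variables (T : R) (f : R -> vec -> vec) (fx : R -> vec -> 'M[R]_n) (xf : R -> vec).
Hypothesis T0 : 0 <= T.
Hypothesis fD : forall t, in_T T t -> frechet_derivative (f t) (fx t).
Hypothesis fx_cont : jointly_continuous_on T fx.
Hypothesis xf_cont : cont_on T xf.

Lemma fx_near_trajectory t0 eta : in_T T t0 -> 0 < eta ->
  exists2 rho, 0 < rho & forall t, in_T T t -> `|t - t0| <= rho ->
    forall xi, enorm (xi - xf t) <= rho -> mnorm (fx t xi - fx t0 (xf t0)) <= eta.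
Proof.
move=> t0T eta0; have [d1 d10 fxd] := fx_cont (xf t0) t0T eta0.
have d1h : 0 < d1 / 2 by rewrite divr_gt0.
have [d2 [d20 xfd]] := xf_cont t0T d1h.
exists (Num.min (d1 / 2) d2) => [|t tT]; first by rewrite lt_min d1h.
rewrite le_min => /andP[td1 td2] xi; rewrite le_min => /andP[xid1 _].
apply: fxd => //; first by lra.
have := xfd t tT td2; have := enormD (xi - xf t) (xf t - xf t0).
by rewrite addrA subrK; lra.
Qed.

Lemma fx_bounded_near_trajectory : exists2 d, 0 < d & forall t, in_T T t ->
  forall xi, enorm (xi - xf t) <= d -> mnorm (fx t xi) <= d^-1.
Proof.
(* the bound [d^-1] makes the property antitone in [d], as [uniform_radius] requires *)
apply: uniform_radius T0 _ _ => [t d d' /andP[d'0 d'd] fxd xi xid'|t0 t0T].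
  rewrite (le_trans (fxd xi (le_trans xid' d'd))) // lef_pV2 ?posrE //.
  exact: lt_le_trans d'd.
have [rho rho0 fxrho] := fx_near_trajectory t0T ltr01.
set B := mnorm (fx t0 (xf t0)) + 1.
have B0 : 0 < B by rewrite /B; have := mnorm_ge0 (fx t0 (xf t0)); lra.
have r0 : 0 < Num.min rho B^-1 by rewrite lt_min rho0 invr_gt0.
exists (Num.min rho B^-1) => // t tT; rewrite le_min => /andP[trho _] xi.
rewrite le_min => /andP[xirho _].
have := mnormD (fx t0 (xf t0)) (fx t xi - fx t0 (xf t0)); rewrite addrC subrK.
have := fxrho t tT trho xi xirho; rewrite -/B => fx1 fxB.
have : B <= (Num.min rho B^-1)^-1.
  by rewrite -{1}[B]invrK lef_pV2 ?posrE ?invr_gt0 // ge_min lexx orbT.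
rewrite /B in fxB *; lra.
Qed.

Lemma fx_unif_cont_near_trajectory eta : 0 < eta ->
  exists2 d, 0 < d & forall t, in_T T t -> forall xi xi',
    enorm (xi - xf t) <= d -> enorm (xi' - xf t) <= d -> mnorm (fx t xi - fx t xi') <= eta.
Proof.
move=> eta0; apply: uniform_radius T0 _ _ => [t d d' /andP[_ d'd] fxd xi xi'|t0 t0T].
  by move=> xid' xi'd'; apply: fxd; apply: le_trans d'd.
have eta2 : 0 < eta / 2 by rewrite divr_gt0.
have [rho rho0 fxrho] := fx_near_trajectory t0T eta2.
exists rho => // t tT trho xi xi' xirho xi'rho.
have := mnormD (fx t xi - fx t0 (xf t0)) (fx t0 (xf t0) - fx t xi').
rewrite addrA subrK [mnorm (fx t0 _ - _)]mnorm_distC.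
have := fxrho t tT trho xi xirho; have := fxrho t tT trho xi' xi'rho; lra.
Qed.

Lemma linearization_near_trajectory : exists2 K, 0 <= K &
  forall eta, 0 < eta -> exists2 d, 0 < d & forall t, in_T T t ->
    forall x, enorm (x - xf t) <= d -> mnorm (fx t x) <= K /\
      enorm (f t x - f t (xf t) - (x - xf t) *m fx t x) <= eta * enorm (x - xf t).
Proof.
have [dB dB0 fxB] := fx_bounded_near_trajectory.
exists dB^-1 => [|eta eta0]; first by rewrite invr_ge0 ltW.
have [dU dU0 fxU] := fx_unif_cont_near_trajectory eta0.
exists (Num.min dB dU) => [|t tT x]; first by rewrite lt_min dB0.
rewrite le_min => /andP[xdB xdU]; split; first exact: fxB.
apply: (mean_value_le (u := xf t) (fD tT)) => s /andP[s0 s1].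
apply: fxU => //; rewrite addrAC subrr add0r enormZ ger0_norm //.
by have := enorm_ge0 (x - xf t); nra.
Qed.

End Trajectory.

Unset Implicit Arguments.
Set Strict Implicit.

Theorem theorem3p2 (R : realType) (n : nat) (T : R)
    (F : 'rV[R]_n -> 'rV[R]_n -> Prop) (f : R -> 'rV[R]_n -> 'rV[R]_n)
    (xf : R -> 'rV[R]_n) :
  0 < T ->
  closed_pset (gph F) ->
  C1_on T f ->
  cont_on T xf ->
  (forall t, in_T T t -> sum_map f t F (xf t) 0) ->
  unif_semismooth_star F
    (fun p => exists t, in_T T t /\ p = (xf t, - f t (xf t))) ->
  forall eps : R, 0 < eps -> exists delta : R, 0 < delta /\
    forall t, in_T T t ->
    forall x y : 'rV[R]_n, enorm (x - xf t) <= delta -> enorm y <= delta ->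
    sum_map f t F x y ->
    forall ystar xstar : 'rV[R]_n, coderiv (sum_map f t F) x y ystar xstar ->
      `|dot xstar (x - xf t) - dot ystar y|
        <= eps * pnorm (xstar, ystar) * pnorm (x - xf t, y).
Proof.
move=> T0 _ /C1_on_partial[fx [fD fx_cont]] xf_cont _ ss eps e0.
have [K K0 lin] := linearization_near_trajectory (ltW T0) fD fx_cont xf_cont.
set c := eps / (2 * ((1 + K) * (2 + K))).
have c0 : 0 < c by rewrite divr_gt0 // !mulr_gt0 //; lra.
have [dS [dS0 ssS]] := ss c c0.
have eta0 : 0 < Num.min (eps / 2) 1 by rewrite lt_min ltr01 divr_gt0.
have [d d0 lind] := lin _ eta0.
have dSK0 : 0 < dS / (2 + K) by rewrite divr_gt0 //; lra.
exists (Num.min d (dS / (2 + K))); split=> [|t tT x y]; first by rewrite lt_min d0.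
rewrite !le_min => /andP[xd xdS] /andP[_ ydS] Gxy ystar xstar cod.
have [fxK rem] := lind t tT x xd.
have ssF : semismooth_estimate_at F (xf t) (- f t (xf t)) c dS.
  by apply: ssS; exists t.
rewrite (le_trans (sum_map_semismooth_estimate (fD t tT)
  (jointly_continuous_at x fx_cont tT) ssF fxK (ltW c0) _ rem _ Gxy cod)) //.
- by rewrite ltW //= ge_min lexx orbT.
- have : pnorm (x - xf t, y) <= dS / (2 + K) by rewrite pnorm_le.
  by rewrite -ler_pdivlMl //; lra.
rewrite !ler_wpM2r ?pnorm_ge0 //.
have : c * ((1 + K) * (2 + K)) = eps / 2.
  by rewrite /c; field; rewrite !gt_eqF //; lra.
have : Num.min (eps / 2) 1 <= eps / 2 by rewrite ge_min lexx.
lra.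
Qed.
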